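(* Let $\Sigma$ be a one-sided subshift of finite type and let $\mathbf B,\mathbf B'$ be Bowen quasicocycles on $\Sigma$. Then $\mathbf B\sim\mathbf B'$ if and only if $\mu_{\mathbf a}(\mathbf B)=\mu_{\mathbf a}(\mathbf B')$ for every periodic word $\mathbf a$.
   Context: $\Sigma=\{(x_n)_{n\ge0}:R_{x_nx_{n+1}}=1\}$ with $R$ an irreducible aperiodic $0/1$ matrix on the alphabet $\{1,\dots,d\}$, $\tau$ the shift, $[x]_n$ the length-$n$ cylinder of $x$. For $B:\Sigma\to\mathbb R$, $\mathrm{var}_n(B)=\sup\{|B(x)-B(y)|:[x]_n=[y]_n\}$. A (Bowen) quasicocycle is a sequence $\mathbf B=(B_n)_{n\ge1}$ of bounded Borel functions with $\sup_{n,m}\sup_x|B_{n+m}(x)-B_n(x)-B_m(\tau^nx)|<\infty$ and $\sup_n\mathrm{var}_n(B_n)<\infty$. $\mathbf B\sim\mathbf B'$ (cohomologous) if $\sup_n\|B_n-B'_n\|_\infty<\infty$. For $\mu$ a $\tau$-invariant probability, $\mu(\mathbf B)=\lim_n\frac1n\int B_n\,d\mu$. A finite allowed word $\mathbf a=a_1\cdots a_n$ is periodic if $R_{a_na_1}=1$; then $\mathbf a\mathbf a\mathbf a\cdots$ is a periodic point of period $n$ and $\mu_{\mathbf a}$ is the invariant probability equidistributed on its orbit. *)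

From HB Require Import structures.
From mathcomp Require Import all_boot all_order all_algebra.
From mathcomp Require Import all_classical all_reals all_analysis.
Set Implicit Arguments. Unset Strict Implicit. Unset Printing Implicit Defensive.
Import Order.TTheory GRing.Theory Num.Theory numFieldNormedType.Exports.
Local Open Scope classical_set_scope.
Local Open Scope ring_scope.

(* Alphabet {1,...,d} is represented by 'I_d; the 0/1 matrix R by a
   boolean matrix A : 'M[bool]_d (A i j = true  <->  R_ij = 1). *)

Definition apath d (A : 'M[bool]_d) (n : nat) (i j : 'I_d) : Prop :=
  exists w : nat -> 'I_d,
    [/\ w 0%N = i, w n = j & forall k, (k < n)%N -> A (w k) (w k.+1)].

Definition irreducible d (A : 'M[bool]_d) : Prop :=
  forall i j : 'I_d, exists n, (0 < n)%N /\ apath A n i j.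

Definition aperiodic d (A : 'M[bool]_d) : Prop :=
  forall (i : 'I_d) (k : nat),
    (forall n, (0 < n)%N -> apath A n i i -> (k %| n)%N) -> k = 1%N.

Definition Sigma d (A : 'M[bool]_d) :=
  {x : nat -> 'I_d | forall n, A (x n) (x n.+1)}.

Definition tau d (A : 'M[bool]_d) (x : Sigma A) : Sigma A :=
  exist (fun y : nat -> 'I_d => forall n, A (y n) (y n.+1)) (fun n => sval x n.+1) (fun n => proj2_sig x n.+1).

Definition cyl d (A : 'M[bool]_d) (n : nat) (x : Sigma A) : set (Sigma A) :=
  [set y | forall k, (k < n)%N -> sval y k = sval x k].

(* Borel sigma-algebra of Sigma (product topology); it is generated by the
   (countably many, clopen) cylinder sets *)
Definition borelSigma d (A : 'M[bool]_d) : set (set (Sigma A)) :=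
  <<s [set C | exists n x, C = cyl n x] >>.

Definition borel_fun (R : realType) d (A : 'M[bool]_d) (f : Sigma A -> R) :=
  forall U : set R, measurable U -> @borelSigma d A (f @^-1` U).

Definition var_le (R : realType) d (A : 'M[bool]_d) (n : nat) (f : Sigma A -> R)
  (C : R) := forall x y : Sigma A, cyl n x y -> `|f x - f y| <= C.

(* Bowen quasicocycle; B n is meaningful for n >= 1 *)
Definition quasicocycle (R : realType) d (A : 'M[bool]_d)
  (B : nat -> Sigma A -> R) : Prop :=
  [/\ forall n, (0 < n)%N -> borel_fun (B n),
      forall n, (0 < n)%N -> exists M : R, forall x, `|B n x| <= M,
      exists C : R, forall n m x, (0 < n)%N -> (0 < m)%N ->
         `|B (n + m)%N x - B n x - B m (iter n (@tau d A) x)| <= C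
    & exists C : R, forall n, (0 < n)%N -> var_le n (B n) C].

Definition cohomologous (R : realType) d (A : 'M[bool]_d)
  (B B' : nat -> Sigma A -> R) : Prop :=
  exists C : R, forall n x, (0 < n)%N -> `|B n x - B' n x| <= C.

(* periodic word a_1...a_p, p = n.+1, encoded as w : 'I_p -> 'I_d;
   ordS k = k+1 mod p, so this includes the wrap-around R_{a_p a_1} = 1 *)
Definition periodic_word d (A : 'M[bool]_d) n (w : 'I_n.+1 -> 'I_d) : Prop :=
  forall k : 'I_n.+1, A (w k) (w (ordS k)).

Lemma perpt_subproof d (A : 'M[bool]_d) n (w : 'I_n.+1 -> 'I_d) :
  periodic_word A w ->
  forall k, A (w (inord (k %% n.+1))) (w (inord (k.+1 %% n.+1))).
Proof.
move=> Hw k.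
have -> : (inord (k.+1 %% n.+1) : 'I_n.+1) = ordS (inord (k %% n.+1)).
  apply: val_inj => /=.
  rewrite inordK; last by rewrite ltn_mod.
  rewrite inordK; last by rewrite ltn_mod.
  by rewrite -addn1 -modnDml addn1.
exact: Hw.
Qed.

Definition perpt d (A : 'M[bool]_d) n (w : 'I_n.+1 -> 'I_d)
  (Hw : periodic_word A w) : Sigma A :=
  exist (fun y : nat -> 'I_d => forall m, A (y m) (y m.+1)) (fun k => w (inord (k %% n.+1))) (perpt_subproof Hw).

(* integral against mu_a, the invariant probability equidistributed on the
   orbit of the periodic point (period p = n.+1) *)
Definition mu_int (R : realType) d (A : 'M[bool]_d) n (w : 'I_n.+1 -> 'I_d)
  (Hw : periodic_word A w) (f : Sigma A -> R) : R :=
  (n.+1%:R)^-1 * \sum_(k < n.+1) f (iter k (@tau d A) (perpt Hw)).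

Definition mu_qc (R : realType) d (A : 'M[bool]_d) n (w : 'I_n.+1 -> 'I_d)
  (Hw : periodic_word A w) (B : nat -> Sigma A -> R) : R :=
  limn (fun m : nat => (m%:R)^-1 * mu_int Hw (B m)).

(* For a periodic word of period [p], the sequence [m |-> mu_a(B_m)] is
   quasi-additive, so it stays within the cocycle defect [C] of
   [m * mu_a(B)]; since [B_p] is nearly constant along the periodic orbit,
   [B_p] at the periodic point is within [3C] of [p * mu_a(B)].  Hence if all
   periodic means of [D = B - B'] vanish, [D] is uniformly bounded on periodic
   points.  A point [x] is shadowed on its first [N + 1] symbols by the periodic
   point obtained by closing [x_0 ... x_N] with a path [x_N -> x_0] of bounded
   length (irreducibility), and bounded variation together with the cocycle
   defect transfer the bound to [D_(N+1)(x)].  Conversely a bounded [D] has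
   vanishing periodic means, since [m * |mu_a(D)|] stays bounded. *)

From HB Require Import structures.
From mathcomp Require Import all_boot all_order all_algebra.
From mathcomp Require Import all_classical all_reals all_analysis.
From mathcomp Require Import ring zify.
Set Implicit Arguments. Unset Strict Implicit. Unset Printing Implicit Defensive.
Import Order.TTheory GRing.Theory Num.Theory numFieldNormedType.Exports.
Local Open Scope classical_set_scope.
Local Open Scope ring_scope.

Section QuasiAdditive.
Variables (R : realType) (a : nat -> R) (C : R).
Hypothesis a_qadd :
  forall n m, (0 < n)%N -> (0 < m)%N -> `|a (n + m) - a n - a m| <= C.

Local Notation avg n := ((n%:R)^-1 * a n).

Lemma qadd_ge0 : 0 <= C.
Proof. exact: le_trans (normr_ge0 _) (@a_qadd 1 1 isT isT). Qed.

Lemma qadd_mulSn n k : (0 < n)%N ->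
  `|a (k.+1 * n) - k.+1%:R * a n| <= k%:R * C.
Proof.
move=> n0; elim: k => [|k IH]; first by rewrite mul1n mul1r subrr normr0 mul0r.
have -> : a (k.+2 * n) - k.+2%:R * a n =
  (a (k.+1 * n + n) - a (k.+1 * n) - a n) + (a (k.+1 * n) - k.+1%:R * a n).
  by rewrite mulSn addnC -[k.+2]addn1 natrD; ring.
have -> : k.+1%:R * C = C + k%:R * C by rewrite -addn1 natrD mulrDl mul1r addrC.
apply: le_trans (ler_normD _ _) _; apply: lerD => //.
by apply: a_qadd; rewrite // muln_gt0 n0.
Qed.

Lemma qadd_avg_mul n m : (0 < n)%N -> (0 < m)%N ->
  `|avg (m * n) - avg n| <= C / n%:R.
Proof.
move=> n0; case: m => // k _.
have n_gt0 : (0 : R) < n%:R by rewrite ltr0n.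
have k_gt0 : (0 : R) < k.+1%:R by rewrite ltr0n.
have -> : avg (k.+1 * n) - avg n =
    (a (k.+1 * n) - k.+1%:R * a n) / (k.+1%:R * n%:R).
  by rewrite natrM; field; rewrite !gt_eqF.
rewrite normrM (ger0_norm (x := _^-1)) ?invr_ge0 ?mulr_ge0 //.
rewrite ler_pdivrMr ?mulr_gt0 // ; apply: le_trans (qadd_mulSn k n0) _.
rewrite mulrA mulrAC divfK ?gt_eqF // mulrC.
by rewrite ler_wpM2l ?qadd_ge0 // ler_nat.
Qed.

Lemma qadd_avg_dist n m : (0 < n)%N -> (0 < m)%N ->
  `|avg n - avg m| <= C / n%:R + C / m%:R.
Proof.
move=> n0 m0.
have -> : avg n - avg m = - (avg (m * n) - avg n) + (avg (n * m) - avg m).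
  by rewrite mulnC; ring.
by apply: le_trans (ler_normD _ _) _; rewrite normrN lerD ?qadd_avg_mul.
Qed.

Lemma div_natr_lt_near (e : R) : 0 < e ->
  \forall n \near \oo, (0 < n)%N /\ C / n%:R < e.
Proof.
move=> e_gt0; near=> n.
have n0 : (0 < n)%N by near: n; exists 1%N.
split => //; rewrite ltr_pdivrMr ?ltr0n // mulrC -ltr_pdivrMr //.
by near: n; exact: nbhs_infty_gtr.
Unshelve. all: by end_near.
Qed.

Lemma qadd_avg_cvg : cvgn (fun n => avg n).
Proof.
apply/cauchy_cvgP/cauchy_ballP => e e_gt0; rewrite near_map2.
have e2_gt0 : 0 < e / 2 by rewrite divr_gt0.
near=> n m; rewrite -ball_normE /=.
have [n0 Cn] : (0 < n)%N /\ C / n%:R < e / 2 by near: n; exact: div_natr_lt_near.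
have [m0 Cm] : (0 < m)%N /\ C / m%:R < e / 2 by near: m; exact: div_natr_lt_near.
apply: le_lt_trans (qadd_avg_dist n0 m0) _.
by rewrite [X in _ < X]splitr ltrD.
Unshelve. all: by end_near.
Qed.

Lemma qadd_dist_linear n : (0 < n)%N ->
  `|a n - n%:R * limn (fun k => avg k)| <= C.
Proof.
move=> n0; set l := limn _.
have n_gt0 : (0 : R) < n%:R by rewrite ltr0n.
have -> : a n - n%:R * l = n%:R * (avg n - l) by field; rewrite gt_eqF.
rewrite normrM gtr0_norm // mulrC -ler_pdivlMr //.
apply/ler_addgt0Pr => e e_gt0.
have e2_gt0 : 0 < e / 2 by rewrite divr_gt0.
near \oo => m.
have [m0 Cm] : (0 < m)%N /\ C / m%:R < e / 2 by near: m; exact: div_natr_lt_near.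
have lm : `|l - avg m| < e / 2 by near: m; exact: cvgr_dist_lt qadd_avg_cvg _ e2_gt0.
have -> : avg n - l = (avg n - avg m) - (l - avg m) by ring.
apply: le_trans (ler_normB _ _) _.
apply: le_trans (lerD (qadd_avg_dist n0 m0) (ltW lm)) _.
by rewrite -addrA lerD2l [X in _ <= X]splitr lerD2r ltW.
Unshelve. all: by end_near.
Qed.

End QuasiAdditive.

Lemma natmul_norm_bounded_eq0 (R : realType) (x K : R) :
  (forall n, (0 < n)%N -> n%:R * `|x| <= K) -> x = 0.
Proof.
move=> bnd; apply/normr0_eq0/eqP; rewrite eq_le normr_ge0 andbT leNgt.
apply/negP => x_gt0; near \oo => n.
have n0 : (0 < n)%N by near: n; exists 1%N.
have : K / `|x| < n%:R by near: n; exact: nbhs_infty_gtr.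
by rewrite ltr_pdivrMr // ltNge bnd.
Unshelve. all: by end_near.
Qed.

Lemma avg_dist_le (R : numFieldType) n (f : 'I_n.+1 -> R) c K :
  (forall k, `|f k - c| <= K) -> `|n.+1%:R^-1 * \sum_(k < n.+1) f k - c| <= K.
Proof.
move=> fK; have n_gt0 : (0 : R) < n.+1%:R by rewrite ltr0n.
have -> : n.+1%:R^-1 * \sum_(k < n.+1) f k - c =
          n.+1%:R^-1 * \sum_(k < n.+1) (f k - c).
  by rewrite sumrB sumr_const card_ord -mulr_natr; field; rewrite gt_eqF.
rewrite normrM gtr0_norm ?invr_gt0 // ler_pdivrMl //.
apply: le_trans (ler_norm_sum _ _ _) _.
by rewrite mulr_natl -[in K *+ _](card_ord n.+1) -sumr_const ler_sum.
Qed.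

Section PeriodicPoints.
Variables (d : nat) (A : 'M[bool]_d).
Local Notation tau := (@tau d A).

Lemma Sigma_val_inj (x y : Sigma A) : sval x = sval y -> x = y.
Proof.
case: x y => x hx [y hy] /= exy; subst y.
by rewrite (Prop_irrelevance hx hy).
Qed.

Lemma sval_iter_tau k (x : Sigma A) m : sval (iter k tau x) m = sval x (k + m)%N.
Proof. by elim: k m => [|k IH] m //=; rewrite IH addnS. Qed.

Variables (n : nat) (w : 'I_n.+1 -> 'I_d) (Hw : periodic_word A w).

Lemma iter_tau_perpt_period : iter n.+1 tau (perpt Hw) = perpt Hw.
Proof.
by apply: Sigma_val_inj; apply: funext => m; rewrite sval_iter_tau /= modnDl.
Qed.

Variable R : realType.

Lemma mu_int_tau (f : Sigma A -> R) : mu_int Hw (f \o tau) = mu_int Hw f.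
Proof.
rewrite /mu_int; congr (_ * _).
transitivity (\sum_(k < n.+1) f (iter k.+1 tau (perpt Hw))); first by [].
rewrite big_ord_recr [RHS]big_ord_recl /= -[tau (iter n _ _)]iterS.
rewrite iter_tau_perpt_period addrC.
by congr (_ + _); apply: eq_bigr.
Qed.

Lemma mu_int_iter_tau j (f : Sigma A -> R) :
  mu_int Hw (f \o iter j tau) = mu_int Hw f.
Proof.
elim: j f => [|j IH] f //.
rewrite -[RHS](IH f) -[RHS]mu_int_tau; congr mu_int.
by apply: funext => x; rewrite /comp iterSr.
Qed.

Lemma mu_intB (f g : Sigma A -> R) :
  mu_int Hw (fun x => f x - g x) = mu_int Hw f - mu_int Hw g.
Proof. by rewrite /mu_int sumrB mulrBr. Qed.

Lemma mu_int_dist_le (f : Sigma A -> R) c K :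
  (forall k, `|f (iter k tau (perpt Hw)) - c| <= K) -> `|mu_int Hw f - c| <= K.
Proof. by move=> fK; apply: avg_dist_le. Qed.

End PeriodicPoints.

Section QuasicocycleDefect.
Variables (R : realType) (d : nat) (A : 'M[bool]_d).

Definition qc_defect_le (B : nat -> Sigma A -> R) (C : R) :=
  forall n m x, (0 < n)%N -> (0 < m)%N ->
    `|B (n + m)%N x - B n x - B m (iter n (@tau d A) x)| <= C.

Lemma qc_defect_ge0 B C : qc_defect_le B C -> Sigma A -> 0 <= C.
Proof. by move=> B_defect x; apply: le_trans (@B_defect 1 1 x isT isT). Qed.

Lemma qc_defect_subr B B' C C' :
  qc_defect_le B C -> qc_defect_le B' C' ->
  qc_defect_le (fun n x => B n x - B' n x) (C + C').
Proof.
move=> B_defect B'_defect n m x n0 m0; set y := iter n _ x.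
have -> : B (n + m)%N x - B' (n + m)%N x - (B n x - B' n x) - (B m y - B' m y) =
    (B (n + m)%N x - B n x - B m y) - (B' (n + m)%N x - B' n x - B' m y).
  by ring.
exact: le_trans (ler_normB _ _) (lerD (B_defect _ _ _ n0 m0) (B'_defect _ _ _ n0 m0)).
Qed.

Lemma var_le_subr n (f g : Sigma A -> R) V V' :
  var_le n f V -> var_le n g V' -> var_le n (fun x => f x - g x) (V + V').
Proof.
move=> fV gV x y xy.
have -> : f x - g x - (f y - g y) = (f x - f y) - (g x - g y) by ring.
exact: le_trans (ler_normB _ _) (lerD (fV x y xy) (gV x y xy)).
Qed.

End QuasicocycleDefect.

Section PeriodicMean.
Variables (R : realType) (d : nat) (A : 'M[bool]_d).
Local Notation tau := (@tau d A).
Variables (B : nat -> Sigma A -> R) (C : R).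
Hypothesis B_defect : qc_defect_le B C.
Variables (n : nat) (w : 'I_n.+1 -> 'I_d) (Hw : periodic_word A w).

Lemma mu_int_qadd p q : (0 < p)%N -> (0 < q)%N ->
  `|mu_int Hw (B (p + q)%N) - mu_int Hw (B p) - mu_int Hw (B q)| <= C.
Proof.
move=> p0 q0; rewrite -(mu_int_iter_tau Hw p (B q)) -!mu_intB -[X in `|X|]subr0.
by apply: mu_int_dist_le => k; rewrite subr0 B_defect.
Qed.

Lemma mu_qc_cvg : cvgn (fun m => m%:R^-1 * mu_int Hw (B m)).
Proof. exact: qadd_avg_cvg mu_int_qadd. Qed.

Lemma mu_int_dist_mu_qc m : (0 < m)%N ->
  `|mu_int Hw (B m) - m%:R * mu_qc Hw B| <= C.
Proof. exact: (qadd_dist_linear mu_int_qadd). Qed.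

(* Compare the two splittings of [B (p + k)] at a point of period [p]. *)
Lemma perpt_dist_mu_int : `|B n.+1 (perpt Hw) - mu_int Hw (B n.+1)| <= C + C.
Proof.
set y := perpt Hw; rewrite distrC; apply: mu_int_dist_le => -[|k].
  by rewrite subrr normr0 addr_ge0 // (qc_defect_ge0 B_defect y).
have -> : B n.+1 (iter k.+1 tau y) - B n.+1 y =
  (B (n.+1 + k.+1)%N y - B n.+1 y - B k.+1 (iter n.+1 tau y))
  - (B (k.+1 + n.+1)%N y - B k.+1 y - B n.+1 (iter k.+1 tau y)).
  by rewrite iter_tau_perpt_period addnC; ring.
by apply: le_trans (ler_normB _ _) _; rewrite lerD ?B_defect.
Qed.

Lemma perpt_dist_mu_qc :
  `|B n.+1 (perpt Hw) - n.+1%:R * mu_qc Hw B| <= C *+ 3.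
Proof.
rewrite -(subrK (mu_int Hw (B n.+1)) (B n.+1 _)) -addrA [C *+ 3]mulrSr mulr2n.
apply: le_trans (ler_normD _ _) _.
by rewrite lerD ?perpt_dist_mu_int ?mu_int_dist_mu_qc.
Qed.

Lemma mu_qc_eq0_of_bounded :
  (exists K, forall m x, (0 < m)%N -> `|B m x| <= K) -> mu_qc Hw B = 0.
Proof.
case=> K BK; apply: (@natmul_norm_bounded_eq0 _ _ (C + K)) => m m0.
rewrite -normr_nat -normrM.
have -> : m%:R * mu_qc Hw B =
  mu_int Hw (B m) - (mu_int Hw (B m) - m%:R * mu_qc Hw B) by ring.
apply: le_trans (ler_normB _ _) _; rewrite addrC lerD ?mu_int_dist_mu_qc //.
by rewrite -[X in `|X|]subr0; apply: mu_int_dist_le => k; rewrite subr0 BK.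
Qed.

End PeriodicMean.

Lemma mu_qcB (R : realType) d (A : 'M[bool]_d) (B B' : nat -> Sigma A -> R)
    (C C' : R) n (w : 'I_n.+1 -> 'I_d) (Hw : periodic_word A w) :
  qc_defect_le B C -> qc_defect_le B' C' ->
  mu_qc Hw (fun m x => B m x - B' m x) = mu_qc Hw B - mu_qc Hw B'.
Proof.
move=> B_defect B'_defect; rewrite /mu_qc.
under eq_fun => m do rewrite mu_intB mulrBr.
rewrite -limB //; first exact: (mu_qc_cvg (Hw := Hw) B_defect).
exact: (mu_qc_cvg (Hw := Hw) B'_defect).
Qed.

Section Closing.
Variables (d : nat) (A : 'M[bool]_d).

Lemma irreducible_closing_length : irreducible A ->
  exists L : 'I_d -> 'I_d -> nat, forall i j, apath A (L i j).+1 i j.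
Proof.
move=> irrA; suff /choice[L HL] : forall ij : 'I_d * 'I_d,
    exists l, apath A l.+1 ij.1 ij.2.
  by exists (fun i j => L (i, j)) => i j; exact: (HL (i, j)).
by case=> i j; have [[|l] [//= _ ?]] := irrA i j; exists l.
Qed.

(* The periodic word is [x_0 ... x_N] followed by the interior of a path
   of length [L + 1] from [x_N] back to [x_0]. *)
Lemma perpt_cyl_closing (x : Sigma A) N L :
  apath A L.+1 (sval x N) (sval x 0) ->
  exists (w : 'I_(N + L).+1 -> 'I_d) (Hw : periodic_word A w),
    cyl N.+1 x (perpt Hw).
Proof.
case=> p [p0 pL pA].
pose z k := if (k <= N)%N then sval x k else p (k - N)%N.
have zA k : (k <= N + L)%N -> A (z k) (z k.+1).
  rewrite /z => kNL; case: (ltngtP k N) => kN.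
  - exact: (proj2_sig x k).
  - by rewrite (subSn (ltnW kN)); apply: pA; lia.
  - by rewrite kN subSnn -p0 pA.
have z_period : z (N + L).+1 = z 0.
  by rewrite /z /= leqNgt ltnS leq_addr /= -addnS addKn.
exists (fun k => z (val k)).
have Hw : periodic_word A (fun k : 'I_(N + L).+1 => z (val k)).
  move=> k /=; have := zA k (ltn_ord k).
  case: (ltngtP k.+1 (N + L).+1) => kNL.
  - by rewrite modn_small.
  - by have := ltn_ord k; lia.
  - by rewrite kNL modnn -z_period.
exists Hw => k kN /=.
have kNL : (k < (N + L).+1)%N by lia.
by rewrite modn_small // inordK // /z -ltnS kN.
Qed.

End Closing.

Section Livsic.
Variables (R : realType) (d : nat) (A : 'M[bool]_d).
Local Notation tau := (@tau d A).
Variables (D : nat -> Sigma A -> R) (C V : R).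
Hypothesis D_defect : qc_defect_le D C.
Hypothesis D_var : forall n, (0 < n)%N -> var_le n (D n) V.
Hypothesis D_bounded : forall n, (0 < n)%N -> exists M : R, forall x, `|D n x| <= M.

Lemma norm_prefix_le N L M y : (0 < N)%N -> 0 <= M ->
    ((0 < L)%N -> `|D L (iter N tau y)| <= M) ->
  `|D N y| <= `|D (N + L)%N y| + C + M.
Proof.
case: L => [|L] N0 M0 DM.
  by rewrite addn0 -addrA lerDl addr_ge0 // (qc_defect_ge0 D_defect y).
have -> : D N y = D (N + L.+1)%N y
    - (D (N + L.+1)%N y - D N y - D L.+1 (iter N tau y)) - D L.+1 (iter N tau y).
  by ring.
apply: le_trans (ler_normB _ _) _; rewrite lerD ?DM //.
by apply: le_trans (ler_normB _ _) _; rewrite lerD ?D_defect.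
Qed.

Lemma bounded_of_mu_qc_eq0 : irreducible A ->
    (forall n (w : 'I_n.+1 -> 'I_d) (Hw : periodic_word A w), mu_qc Hw D = 0) ->
  exists K, forall n x, (0 < n)%N -> `|D n x| <= K.
Proof.
move=> irrA mu0; have [L HL] := irreducible_closing_length irrA.
have /choice[M HM] : forall l, exists M : R,
    0 <= M /\ ((0 < l)%N -> forall x, `|D l x| <= M).
  case=> [|l]; first by exists 0.
  have [M HM] := D_bounded (ltn0Sn l).
  by exists `|M|; split => // _ x; apply: le_trans (HM x) (ler_norm M).
pose Mmax := \big[Num.max/0]_(ij : 'I_d * 'I_d) M (L ij.1 ij.2).
exists (V + (C *+ 3 + C + Mmax)) => -[//|N] x _.
set l := L (sval x N) (sval x 0%N).
have [w [Hw xy]] := perpt_cyl_closing (HL (sval x N) (sval x 0%N)).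
have Dy : `|D (N + l).+1 (perpt Hw)| <= C *+ 3.
  by have := perpt_dist_mu_qc D_defect Hw; rewrite mu0 mulr0 subr0.
have Ml : M l <= Mmax.
  exact: (le_bigmax 0 (fun ij => M (L ij.1 ij.2)) (sval x N, sval x 0%N)).
rewrite -[D _ x](subrK (D N.+1 (perpt Hw))).
apply: le_trans (ler_normD _ _) (lerD (D_var (ltn0Sn N) xy) _).
have [Ml0 Ml_bound] := HM l.
apply: le_trans (norm_prefix_le (N := N.+1) (y := perpt Hw) isT Ml0 _) _.
  by move=> l0; exact: Ml_bound.
by rewrite !lerD.
Qed.

End Livsic.

Unset Implicit Arguments.
Theorem mainTheorem8 (R : realType) (d : nat) (A : 'M[bool]_d)
  (HAirr : irreducible A) (HAaper : aperiodic A)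
  (B B' : nat -> Sigma A -> R)
  (HB : quasicocycle B) (HB' : quasicocycle B') :
  cohomologous B B' <->
  (forall (n : nat) (w : 'I_n.+1 -> 'I_d) (Hw : periodic_word A w),
      mu_qc Hw B = mu_qc Hw B').
Proof.
case: HB => _ B_bounded [C B_defect] [V B_var].
case: HB' => _ B'_bounded [C' B'_defect] [V' B'_var].
pose D n x := B n x - B' n x.
have D_defect : qc_defect_le D (C + C') := qc_defect_subr B_defect B'_defect.
have mu_qcD n (w : 'I_n.+1 -> 'I_d) (Hw : periodic_word A w) :
  mu_qc Hw D = mu_qc Hw B - mu_qc Hw B' := mu_qcB Hw B_defect B'_defect.
split.
- move=> D_bounded n w Hw; apply/eqP; rewrite -subr_eq0 -mu_qcD.
  exact/eqP/(mu_qc_eq0_of_bounded D_defect).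
- move=> mu_eq; apply: (bounded_of_mu_qc_eq0 D_defect (V := V + V')) HAirr _.
  + by move=> n n0; apply: var_le_subr; [apply: B_var | apply: B'_var].
  + move=> n n0; have [M BM] := B_bounded n n0; have [M' B'M] := B'_bounded n n0.
    by exists (M + M') => x; apply: le_trans (ler_normB _ _) (lerD (BM x) (B'M x)).
  + by move=> n w Hw; rewrite mu_qcD mu_eq subrr.
Qed.
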